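(* Let $p_1,p_2,\dots$ be an infinite sequence of distinct primes and $e_i\in\mathbb N$ for each $i$. Consider the unital ring $P=\prod_{i\in\mathbb N}\mathbb Z(p_i^{e_i})$ (componentwise operations) and let $G$ be a unital subring of $P$ containing the ideal $T=\bigoplus_{i\in\mathbb N}\mathbb Z(p_i^{e_i})$. If the quotient ring $G/T$ is a field, then $G$ is an E-ring and its additive group is strongly co-Hopfian; moreover, if the $e_i$ are not bounded, then $G$ is not uniformly strongly co-Hopfian.
   Context: All groups are abelian. A ring $R$ is an E-ring if every endomorphism of its additive group is multiplication by some element of $R$. A group $G$ is strongly co-Hopfian if for every endomorphism $f$ there is $n\in\mathbb N$ with $f^n(G)=f^{n+1}(G)$; it is uniformly strongly co-Hopfian if there is a fixed $m$ with $\phi^m(G)=\phi^{m+1}(G)$ for all endomorphisms $\phi$. $\mathbb Z(q)$ denotes the cyclic group (ring) of order $q$. *)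

From mathcomp Require Import all_boot all_algebra.
Set Implicit Arguments. Unset Strict Implicit. Unset Printing Implicit Defensive.
Import GRing.Theory.
Local Open Scope ring_scope.

Definition Prod (p e : nat -> nat) : Type := forall i : nat, 'Z_(p i ^ e i).

Section ProdOps.
Variables p e : nat -> nat.
Definition padd (x y : Prod p e) : Prod p e := fun i => x i + y i.
Definition pmul (x y : Prod p e) : Prod p e := fun i => x i * y i.
Definition popp (x : Prod p e) : Prod p e := fun i => - x i.
Definition pzero : Prod p e := fun i => 0.
Definition pone : Prod p e := fun i => 1.

Definition inT (x : Prod p e) : Prop := exists N : nat, forall i, (N <= i)%N -> x i = 0.

Definition unital_subring (G : Prod p e -> Prop) : Prop :=
  [/\ G pone,
      (forall x y, G x -> G y -> G (padd x y)),
      (forall x, G x -> G (popp x)) &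
      (forall x y, G x -> G y -> G (pmul x y))].

(* The quotient ring G/T is a field (T is an ideal of G when T ⊆ G):
   it is nonzero and every nonzero class is invertible. *)
Definition quotient_is_field (G : Prod p e -> Prop) : Prop :=
  ~ inT pone /\
  forall x, G x -> ~ inT x -> exists y, G y /\ inT (padd (pmul x y) (popp pone)).

(* additive endomorphisms of the group G (values outside G irrelevant) *)
Definition add_endo (G : Prod p e -> Prop) (f : Prod p e -> Prod p e) : Prop :=
  (forall x, G x -> G (f x)) /\ (forall x y, G x -> G y -> f (padd x y) = padd (f x) (f y)).

Definition E_ring (G : Prod p e -> Prop) : Prop :=
  forall f, add_endo G f -> exists r, G r /\ forall x, G x -> f x = pmul r x.

Definition img_iter (G : Prod p e -> Prop) (f : Prod p e -> Prod p e) (n : nat)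
  (y : Prod p e) : Prop := exists x, G x /\ y = iter n f x.

Definition strongly_coHopfian (G : Prod p e -> Prop) : Prop :=
  forall f, add_endo G f -> exists n : nat,
    forall y, img_iter G f n y <-> img_iter G f n.+1 y.

Definition uniformly_strongly_coHopfian (G : Prod p e -> Prop) : Prop :=
  exists m : nat, forall f, add_endo G f ->
    forall y, img_iter G f m y <-> img_iter G f m.+1 y.
End ProdOps.

From mathcomp Require Import all_boot all_algebra.
From Stdlib Require Import Classical FunctionalExtensionality.
Set Implicit Arguments. Unset Strict Implicit. Unset Printing Implicit Defensive.
Import GRing.Theory.
Local Open Scope ring_scope.

(* Write q_i = p_i^e_i.  An additive endomorphism f of G acts coordinatewise:
   if y_i = 0, pick d with d * q_i = 1 modulo T and an integer M prime to q_i
   that kills the finitely many remaining coordinates; then M y = q_i (M d y),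
   so M f(y)_i = q_i f(M d y)_i = 0 and f(y)_i = 0.  Comparing x with x_i * 1
   at coordinate i gives f = multiplication by f(1), so G is an E-ring.  For
   r in G, modulo T either r = 0 or r is invertible; the finitely many
   remaining coordinates are either units or nilpotent of index at most e_k,
   so r^n G = r^(n+1) G once n exceeds these e_k.  No single n works for all
   r: multiplication by p_i at coordinate i alone has p_i^m G strictly above
   p_i^(m+1) G as long as m < e_i. *)

Lemma prime_expn_gt1 p k : prime p -> (0 < k)%N -> (1 < p ^ k)%N.
Proof. by move=> p_pr k_gt0; rewrite -(expn0 p) ltn_exp2l ?prime_gt1. Qed.

Lemma Zp_nat_eq0 n a : (1 < n)%N -> ((a%:R : 'Z_n) == 0) = (n %| a)%N.
Proof. by move=> n_gt1; rewrite -val_eqE /= val_Zp_nat. Qed.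

Lemma Zp_mulrn_coprime_eq0 n m (x : 'Z_n) :
  (1 < n)%N -> coprime n m -> x *+ m = 0 -> x = 0.
Proof.
move=> n_gt1 co_nm xm0.
have m_unit : (m%:R : 'Z_n) \is a GRing.unit by rewrite unitZpE.
by apply: (mulIr m_unit); rewrite mul0r mulr_natr.
Qed.

Lemma Zp_prime_power_nonunit_nilpotent p k n (x : 'Z_(p ^ k)) :
  prime p -> (0 < k)%N -> x \isn't a GRing.unit -> (k <= n)%N -> x ^+ n = 0.
Proof.
move=> p_pr k_gt0 x_nonunit le_kn.
have pk_gt1 := prime_expn_gt1 p_pr k_gt0.
suff xk0 : x ^+ k = 0 by rewrite -(subnK le_kn) exprD xk0 mulr0.
move: x_nonunit; rewrite -(natr_Zp x) -natrX unitZpE // coprime_pexpl //.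
rewrite prime_coprime // negbK => p_dvd_x.
by apply/eqP; rewrite Zp_nat_eq0 // dvdn_exp2r.
Qed.

Lemma Zp_prime_expn_neq p k m (x : 'Z_(p ^ k)) :
  prime p -> (m < k)%N -> (p%:R : 'Z_(p ^ k)) ^+ m != p%:R ^+ m.+1 * x.
Proof.
move=> p_pr lt_mk; have pk_gt1 := prime_expn_gt1 p_pr (leq_ltn_trans (leq0n m) lt_mk).
rewrite -(natr_Zp x) -!natrX -natrM -val_eqE /= !val_Zp_nat //.
have dvd_pm1_pk : (p ^ m.+1 %| p ^ k)%N by rewrite dvdn_exp2l.
apply/eqP => /(congr1 (modn^~ (p ^ m.+1)%N)).
rewrite !modn_dvdm // modnMr modn_small ?ltn_exp2l ?prime_gt1 // => /eqP.
by rewrite expn_eq0 (gtn_eqF (prime_gt0 p_pr)).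
Qed.

Section ProductOfCyclics.
Variables p e : nat -> nat.
Hypotheses (p_prime : forall i, prime (p i)) (e_gt0 : forall i, (0 < e i)%N).

Local Notation q i := (p i ^ e i)%N.
Local Notation P := (Prod p e).

Lemma q_gt1 i : (1 < q i)%N. Proof. exact: prime_expn_gt1. Qed.

Lemma prod_ext (x y : P) : (forall k, x k = y k) -> x = y.
Proof. exact: functional_extensionality_dep. Qed.

Definition pmuln (x : P) n : P := fun k => x k *+ n.

Lemma pmuln0 x : pmuln x 0 = pzero p e.
Proof. by apply: prod_ext => k; rewrite /pmuln mulr0n. Qed.

Lemma pmulnS x n : pmuln x n.+1 = padd x (pmuln x n).
Proof. by apply: prod_ext => k; rewrite /pmuln /padd mulrS. Qed.

Lemma iter_pmul (r x : P) n : iter n (pmul r) x = fun k => r k ^+ n * x k.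
Proof.
apply: prod_ext => k; elim: n => [|n IHn] /=; first by rewrite mul1r.
by rewrite /pmul IHn mulrA -exprS.
Qed.

Hypothesis p_inj : injective p.

Lemma coprime_q i j : i != j -> coprime (q i) (q j).
Proof.
move=> neq_ij; rewrite coprime_pexpl // coprime_pexpr // prime_coprime //.
by rewrite dvdn_prime2 //; apply: contra neq_ij => /eqP/p_inj->.
Qed.

Lemma exists_coprime_multiple i N :
  exists2 M, coprime (q i) M & forall k, (k < N)%N -> k != i -> (q k %| M)%N.
Proof.
exists (\prod_(k < N | k != i :> nat) q k)%N.
  apply: (big_ind (fun m => coprime (q i) m)) => [|a b|k neq_ki]; first exact: coprimen1.
    by rewrite coprimeMr => -> ->.
  by rewrite coprime_q // eq_sym.
by move=> k lt_kN neq_ki; rewrite (bigD1 (Ordinal lt_kN)) //= dvdn_mulr.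
Qed.

Lemma q1_notin_T i : ~ inT (pmuln (pone p e) (q i)).
Proof.
move=> [N qN0]; set k := maxn N i.+1.
have neq_ki : k != i by rewrite gtn_eqF // leq_max ltnSn orbT.
move: (qN0 k (leq_maxl N i.+1)); rewrite /pmuln /pone => /eqP.
rewrite Zp_nat_eq0 ?q_gt1 // => dvd_qk_qi.
have := coprime_q neq_ki; rewrite /coprime (gcdn_idPl dvd_qk_qi) => /eqP qk1.
by have := q_gt1 k; rewrite qk1.
Qed.

Definition single i n : P := fun k => if k == i then n%:R else 0.

Lemma single_inT i n : inT (single i n).
Proof. by exists i.+1 => k lt_ik; rewrite /single gtn_eqF. Qed.

Section Subring.
Variable G : P -> Prop.
Hypotheses (G_subring : unital_subring G) (T_sub_G : forall x, inT x -> G x)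
  (GmodT_field : quotient_is_field G).

Lemma G1 : G (pone p e). Proof. by case: G_subring. Qed.
Lemma GD x y : G x -> G y -> G (padd x y).
Proof. by case: G_subring => _ GD _ _; apply: GD. Qed.
Lemma GN x : G x -> G (popp x).
Proof. by case: G_subring => _ _ GN _; apply: GN. Qed.
Lemma GM x y : G x -> G y -> G (pmul x y).
Proof. by case: G_subring => _ _ _ GM; apply: GM. Qed.

Lemma G0 : G (pzero p e).
Proof.
have -> : pzero p e = padd (pone p e) (popp (pone p e)).
  by apply: prod_ext => k; rewrite /padd /popp subrr.
by apply: GD (GN _); apply: G1.
Qed.

Lemma Gmuln x n : G x -> G (pmuln x n).
Proof.
move=> Gx; elim: n => [|n IHn]; first by rewrite pmuln0; apply: G0.
by rewrite pmulnS; apply: GD.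
Qed.

Lemma add_endo_pmul r : G r -> add_endo G (pmul r).
Proof.
move=> Gr; split=> [x|x y _ _]; first exact: GM.
by apply: prod_ext => k; rewrite /pmul /padd mulrDr.
Qed.

Section AdditiveEndo.
Variable f : P -> P.
Hypothesis f_endo : add_endo G f.

Lemma endoG x : G x -> G (f x). Proof. by case: f_endo => fG _; apply: fG. Qed.

Lemma endoD x y : G x -> G y -> f (padd x y) = padd (f x) (f y).
Proof. by case: f_endo => _ fD; apply: fD. Qed.

Lemma endo0 : f (pzero p e) = pzero p e.
Proof.
have := endoD G0 G0.
have -> : padd (pzero p e) (pzero p e) = pzero p e.
  by apply: prod_ext => k; rewrite /padd addr0.
move=> f00; apply: prod_ext => k; have := congr1 (fun z => z k) f00.
by rewrite /padd => /esym/eqP; rewrite -subr_eq0 addrK => /eqP.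
Qed.

Lemma endoN x : G x -> f (popp x) = popp (f x).
Proof.
move=> Gx; have := endoD Gx (GN Gx).
have -> : padd x (popp x) = pzero p e by apply: prod_ext => k; rewrite /padd /popp subrr.
rewrite endo0 => fxN; apply: prod_ext => k; have := congr1 (fun z => z k) fxN.
by rewrite /padd /popp /pzero => /esym/eqP; rewrite addrC addr_eq0 => /eqP.
Qed.

Lemma endoMn x n : G x -> f (pmuln x n) = pmuln (f x) n.
Proof.
move=> Gx; elim: n => [|n IHn]; first by rewrite !pmuln0 endo0.
by rewrite !pmulnS endoD ?IHn //; apply: Gmuln.
Qed.

Lemma iter_endo_pmul (r x : P) n : (forall y, G y -> f y = pmul r y) -> G x ->
  G (iter n f x) /\ iter n f x = iter n (pmul r) x.
Proof.
move=> f_mul Gx; elim: n => [|n [Gfnx fnx]] //=.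
by rewrite -fnx -f_mul //; split=> //; apply: endoG.
Qed.

Lemma endo_coord_eq0 i y : G y -> y i = 0 -> f y i = 0.
Proof.
move=> Gy yi0.
have Gqi : G (pmuln (pone p e) (q i)) by apply/Gmuln/G1.
have [d [Gd [N qd1]]] := GmodT_field.2 _ Gqi (@q1_notin_T i).
have [M co_qi_M dvd_qk_M] := exists_coprime_multiple i N.
have Gdy : G (pmul d y) by apply: GM.
have My : pmuln y M = pmuln (pmuln (pmul d y) M) (q i).
  apply: prod_ext => k; rewrite /pmuln /pmul.
  have [lt_kN | le_Nk] := ltnP k N.
    have [-> | neq_ki] := eqVneq k i; first by rewrite yi0 mulr0 !mul0rn.
    have M0 : (M%:R : 'Z_(q k)) = 0 by apply/eqP; rewrite Zp_nat_eq0 ?q_gt1 ?dvd_qk_M.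
    by rewrite -[y k *+ M]mulr_natr -[d k * y k *+ M]mulr_natr M0 !mulr0 mul0rn.
  move: (qd1 k le_Nk); rewrite /padd /pmul /popp /pone /pmuln => /eqP.
  rewrite subr_eq0 => /eqP qd_k1.
  by rewrite -mulrnA mulnC mulrnA -mulrnAl -mulr_natl qd_k1 mul1r.
have /= := congr1 (fun z => f z i) My.
rewrite endoMn // endoMn; last by apply: Gmuln.
rewrite /pmuln -[_ *+ q i]mulr_natr pchar_Zp ?q_gt1 // mulr0.
exact: Zp_mulrn_coprime_eq0 (q_gt1 i) co_qi_M.
Qed.

Lemma endo_pmul x : G x -> f x = pmul (f (pone p e)) x.
Proof.
move=> Gx; apply: prod_ext => k.
have Gx1 : G (pmuln (pone p e) (x k)) by apply/Gmuln/G1.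
have y0 : padd x (popp (pmuln (pone p e) (x k))) k = 0.
  by rewrite /padd /popp /pmuln /pone natr_Zp subrr.
have := endo_coord_eq0 (GD Gx (GN Gx1)) y0.
rewrite (endoD Gx (GN Gx1)) (endoN Gx1) (endoMn _ G1) /padd /popp /pmuln /pmul => /eqP.
by rewrite subr_eq0 => /eqP ->; rewrite -mulr_natr natr_Zp.
Qed.

End AdditiveEndo.

Lemma G_E_ring : E_ring G.
Proof.
move=> f f_endo; exists (f (pone p e)).
by split; [apply: endoG G1 | apply: endo_pmul].
Qed.

Lemma eventually_zero_or_invertible r : G r ->
  exists N s, G s /\ forall k, (N <= k)%N -> r k = 0 \/ r k * s k = 1.
Proof.
move=> Gr; have [[N rN0] | r_notin_T] := classic (inT r).
  by exists N, (pzero p e); split=> [|k le_Nk]; [apply: G0 | left; apply: rN0].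
have [s [Gs [N rs1]]] := GmodT_field.2 _ Gr r_notin_T.
exists N, s; split=> // k le_Nk; right.
by move: (rs1 k le_Nk); rewrite /padd /pmul /popp /pone => /eqP; rewrite subr_eq0 => /eqP.
Qed.

Lemma pmul_image_stable r : G r -> exists n, forall x, G x ->
  exists2 z, G z & iter n (pmul r) x = iter n.+1 (pmul r) z.
Proof.
move=> Gr; have [N [s [Gs rs_eventually]]] := eventually_zero_or_invertible Gr.
set n := (\max_(j < N) e j).+1.
have lt_e_n k : (k < N)%N -> (e k < n)%N.
  by move=> lt_kN; rewrite /n ltnS; apply: (leq_bigmax (Ordinal lt_kN)).
exists n => x Gx.
(* w repairs the finitely many coordinates k < N where s is not an inverse. *)
pose w : P := fun k =>
  if (k < N)%N && (r k \is a GRing.unit) then (r k)^-1 * x k - s k * x k else 0.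
have Gw : G w by apply: T_sub_G; exists N => k; rewrite /w leqNgt => /negbTE->.
exists (padd (pmul s x) w); first by apply: GD => //; apply: GM.
rewrite !iter_pmul; apply: prod_ext => k; rewrite /padd /pmul /w.
have [lt_kN | le_Nk] /= := ltnP k N.
  case: ifP => r_unit; first by rewrite addrC subrK exprSr -mulrA mulVKr.
  have nil m : (e k <= m)%N -> r k ^+ m = 0.
    by apply: Zp_prime_power_nonunit_nilpotent; rewrite ?r_unit.
  have le_ek_n := ltnW (lt_e_n k lt_kN).
  by rewrite !nil ?mul0r // leqW.
rewrite addr0; have [-> | rs1] := rs_eventually k le_Nk; first by rewrite !expr0n !mul0r.
by rewrite exprSr -mulrA (mulrA (r k)) rs1 mul1r.
Qed.

Lemma G_strongly_coHopfian : strongly_coHopfian G.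
Proof.
move=> f f_endo; have [r [Gr f_mul]] := G_E_ring f_endo.
have [n stable] := pmul_image_stable Gr.
exists n => y; split=> [[x [Gx ->]] | [x [Gx ->]]].
  have [z Gz rnx_eq] := stable x Gx; exists z; split=> //.
  by rewrite (iter_endo_pmul f_endo n f_mul Gx).2 (iter_endo_pmul f_endo n.+1 f_mul Gz).2.
by exists (f x); split; [apply: endoG | rewrite iterSr].
Qed.

Lemma G_not_uniformly_coHopfian : (~ exists B, forall i, (e i <= B)%N) ->
  ~ uniformly_strongly_coHopfian G.
Proof.
move=> e_unbounded [m uniform].
have [i lt_m_ei] : exists i, (m < e i)%N.
  apply: NNPP => no_i; apply: e_unbounded; exists m => i.
  by rewrite leqNgt; apply/negP => lt_m_ei; apply: no_i; exists i.
have pi_endo := add_endo_pmul (T_sub_G (@single_inT i (p i))).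
have [+ _] := uniform _ pi_endo (iter m (pmul (single i (p i))) (single i 1)).
move=> /(_ (ex_intro _ _ (conj (T_sub_G (@single_inT i 1)) erefl))) [x [_]].
rewrite !iter_pmul => /(congr1 (fun z => z i)) /=.
rewrite /single eqxx mulr1n mulr1; apply/eqP.
exact: Zp_prime_expn_neq.
Qed.

End Subring.
End ProductOfCyclics.

Theorem mainTheorem16 (p e : nat -> nat) (G : Prod p e -> Prop) :
  (forall i, prime (p i)) ->
  injective p ->
  (forall i, (0 < e i)%N) ->
  unital_subring G ->
  (forall x, inT x -> G x) ->
  quotient_is_field G ->
  E_ring G /\ strongly_coHopfian G /\
  ((~ exists B : nat, forall i, (e i <= B)%N) -> ~ uniformly_strongly_coHopfian G).
Proof.
move=> p_prime p_inj e_gt0 G_subring T_sub_G GmodT_field.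
split; first exact: G_E_ring.
split; first exact: G_strongly_coHopfian.
exact: G_not_uniformly_coHopfian.
Qed.
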